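(* If $n\ge 1$ and $k\ge 3$ are integers, then the maximum degree of the $k$-Pell graph $\Pi_{n,k}$ is $\Delta(\Pi_{n,k})=2n$ and its minimum degree is $\delta(\Pi_{n,k})=\lceil n/2\rceil$.
   Context: For an integer $k\ge 2$, a $k$-Pell string is a finite word over the alphabet $\{0,1,\ldots,k-1,kk\}$, i.e. a word over $\{0,1,\ldots,k\}$ in which every maximal run of the letter $k$ has even length. For $n\ge 0$, the $k$-Pell graph $\Pi_{n,k}$ has as vertices all $k$-Pell strings of length $n$, and two vertices are adjacent if one is obtained from the other either by replacing a single letter $i$ by $i+1$ (or vice versa) for some $i\in\{0,1,\ldots,k-2\}$, or by replacing one factor $(k-1)(k-1)$ by $kk$ (or vice versa), in such a way that the resulting string is again a $k$-Pell string. *)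

From mathcomp Require Import all_boot.
Set Implicit Arguments. Unset Strict Implicit. Unset Printing Implicit Defensive.

(* Letters are natural numbers 0..k; the composite letter "kk" is the
   digit k written twice. *)
Fixpoint pell (k : nat) (s : seq nat) : bool :=
  match s with
  | [::] => true
  | x :: t =>
      if x == k then
        match t with
        | y :: t' => (y == k) && pell k t'
        | [::] => false
        end
      else (x < k) && pell k t
  end.

Definition agree_outside (P : pred nat) (u v : seq nat) : bool :=
  (size u == size v) &&
  all (fun i => P i || (nth 0 u i == nth 0 v i)) (iota 0 (size u)).

Definition adj_letter (k : nat) (u v : seq nat) : bool :=
  [exists j : 'I_(size u),
     agree_outside (pred1 (val j)) u v &&
     [|| (nth 0 v j == (nth 0 u j).+1) && (nth 0 u j <= k - 2)
       | (nth 0 u j == (nth 0 v j).+1) && (nth 0 v j <= k - 2)]].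

Definition adj_block (k : nat) (u v : seq nat) : bool :=
  [exists j : 'I_(size u),
     (j.+1 < size u) &&
     agree_outside (fun i => (i == val j) || (i == (val j).+1)) u v &&
     [|| [&& nth 0 u j == k.-1, nth 0 u j.+1 == k.-1,
             nth 0 v j == k & nth 0 v j.+1 == k]
       | [&& nth 0 v j == k.-1, nth 0 v j.+1 == k.-1,
             nth 0 u j == k & nth 0 u j.+1 == k]]].

Definition pell_adj (k : nat) (u v : seq nat) : bool :=
  [&& pell k u, pell k v & adj_letter k u v || adj_block k u v].

Definition pell_vertex (n k : nat) (w : n.-tuple 'I_k.+1) : bool :=
  pell k (map val w).

Definition pell_deg (n k : nat) (v : n.-tuple 'I_k.+1) : nat :=
  #|[set w : n.-tuple 'I_k.+1 | pell_vertex w && pell_adj k (map val v) (map val w)]|.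

From mathcomp Require Import all_boot zify.
Set Implicit Arguments. Unset Strict Implicit. Unset Printing Implicit Defensive.

(* Every neighbour of a Pell word u is obtained by changing u at one position j,
   and is determined by j and by whether the letter at j goes up or down (the
   block moves (k-1)(k-1) <-> kk counting as "up" at their first position), so
   the degree is at most 2n; for 1^n, and k >= 3, all 2n such changes are legal.
   Conversely each letter of u can be changed on its own (x to x-1, 0 to 1, kk to
   (k-1)(k-1)), which gives distinct neighbours, one per letter, and u has at
   least ceil(n/2) letters.  For (kk)^(n/2) 0^(n mod 2) these are the only
   neighbours: a (k-1)(k-1) block at an odd position would leave a run of an odd
   number of k's in front of it. *)


Definition set_nth2 (u : seq nat) (j c : nat) : seq nat :=
  set_nth 0 (set_nth 0 u j c) j.+1 c.

Lemma nth_set_nth2 u j c i :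
  nth 0 (set_nth2 u j c) i = if (i == j) || (i == j.+1) then c else nth 0 u i.
Proof.
by rewrite /set_nth2 nth_set_nth /= nth_set_nth /=; case: (i == j); case: (i == j.+1).
Qed.

Lemma all_set_nth (T : eqType) (a : pred T) x0 s j y :
  j < size s -> all a s -> a y -> all a (set_nth x0 s j y).
Proof.
move=> js /allP As ay; rewrite set_nthE js all_cat /= ay.
by apply/andP; split; apply/allP => x; [move/mem_take | move/mem_drop]; apply: As.
Qed.

Lemma agree_outsideP P u w :
  reflect (size u = size w /\ forall i, ~~ P i -> nth 0 u i = nth 0 w i)
          (agree_outside P u w).
Proof.
apply: (iffP andP) => [[/eqP su /allP agree] | [su agree]]; split => //.
- move=> i Pi; case: (ltnP i (size u)) => [iu | ui]; last by rewrite !nth_default -?su.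
  by move: (agree i); rewrite mem_iota iu (negbTE Pi) => /(_ isT)/eqP.
- by apply/eqP.
- by apply/allP => i _; apply/orP; case: (boolP (P i)) => Pi; [left | right; rewrite agree].
Qed.

Lemma agree_outside_pred1 j u w : j < size u ->
  agree_outside (pred1 j) u w = (w == set_nth 0 u j (nth 0 w j)).
Proof.
move=> ju; apply/agree_outsideP/eqP => [[su agree] | ->].
- apply: (@eq_from_nth _ 0) => [|i _]; first by rewrite size_set_nth -su; lia.
  by rewrite nth_set_nth /=; case: eqP => [-> // | /eqP ij]; rewrite agree.
- split => [|i /= /negbTE ij]; first by rewrite size_set_nth; lia.
  by rewrite nth_set_nth /= ij.
Qed.

Lemma agree_outside_pred2 j u w : j.+1 < size u -> nth 0 w j.+1 = nth 0 w j ->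
  agree_outside (fun i => (i == j) || (i == j.+1)) u w = (w == set_nth2 u j (nth 0 w j)).
Proof.
move=> ju wj; apply/agree_outsideP/eqP => [[su agree] | ->].
- apply: (@eq_from_nth _ 0) => [|i _]; first by rewrite !size_set_nth -su; lia.
  rewrite nth_set_nth2; case: ifP => [/orP[] /eqP-> // | /norP[ij ij1]].
  by rewrite agree // negb_or ij ij1.
- split => [|i /= /negbTE ij]; first by rewrite !size_set_nth; lia.
  by rewrite nth_set_nth2 ij.
Qed.

Section PellWords.

Variable k : nat.

Lemma pell_ind (P : seq nat -> Prop) :
  P [::] ->
  (forall x s, x < k -> pell k s -> P s -> P (x :: s)) ->
  (forall s, pell k s -> P s -> P [:: k, k & s]) ->
  forall s, pell k s -> P s.
Proof.
move=> P0 Pletter Pblock s; have [N] := ubnP (size s).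
elim: N s => // N IH [|x s] //= sN.
case: ifP => [/eqP -> | _].
  by case: s sN => // y s /= sN /andP[/eqP -> ps]; apply: Pblock ps (IH _ _ ps); lia.
by case/andP=> xk ps; apply: Pletter xk ps (IH _ _ ps); lia.
Qed.

Lemma pell_le s : pell k s -> all (fun x => x <= k) s.
Proof.
by move: s; apply: pell_ind => //= [x s /ltnW -> _ -> | s _ ->]; rewrite ?leqnn.
Qed.

Lemma pell_lt s : all (fun x => x < k) s -> pell k s.
Proof. by elim: s => //= x s IH /andP[xk /IH ->]; rewrite (ltn_eqF xk) xk. Qed.

Lemma pell_prefix_even s j : pell k s ->
  (forall i, i < j -> nth 0 s i = k) -> nth 0 s j != k -> ~~ odd j.
Proof.
move=> ps; move: s ps j; apply: pell_ind => [|x s xk _ _|s _ IH] [|j] //= pre.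
- by rewrite -(pre 0) ?eqxx.
- by move: xk; rewrite -(pre 0) ?ltnn.
- case: j pre => [|j] pre; first by rewrite eqxx.
  by rewrite negbK; apply: IH => i ij; apply: (pre i.+2).
Qed.

Definition letter_step (x y : nat) : bool :=
  ((y == x.+1) && (x <= k - 2)) || ((x == y.+1) && (y <= k - 2)).

Definition block_step (x y : nat) : bool :=
  ((x == k.-1) && (y == k)) || ((x == k) && (y == k.-1)).

Lemma adj_letterP u w :
  reflect (exists j y, [/\ j < size u, w = set_nth 0 u j y & letter_step (nth 0 u j) y])
          (adj_letter k u w).
Proof.
apply: (iffP existsP) => [[j /andP[agree step]] | [j [y [ju -> step]]]].
  move: agree; rewrite agree_outside_pred1 ?ltn_ord // => /eqP agree.
  by exists j, (nth 0 w j); split; rewrite ?ltn_ord.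
by exists (Ordinal ju); rewrite agree_outside_pred1 //= nth_set_nth /= !eqxx.
Qed.

Lemma adj_blockP u w :
  reflect (exists j y, [/\ j.+1 < size u, nth 0 u j.+1 = nth 0 u j,
                           w = set_nth2 u j y & block_step (nth 0 u j) y])
          (adj_block k u w).
Proof.
apply: (iffP existsP) => [[j /andP[/andP[j1u agree] steps]] | [j [y [j1u uj -> step]]]].
  have [uj wj step] : [/\ nth 0 u j.+1 = nth 0 u j, nth 0 w j.+1 = nth 0 w j
                        & block_step (nth 0 u j) (nth 0 w j)].
    case/orP: steps => /and4P[/eqP-> /eqP-> /eqP-> /eqP->];
    by rewrite /block_step !eqxx ?orbT.
  move: agree; rewrite agree_outside_pred2 // => /eqP agree.
  by exists j, (nth 0 w j).
exists (Ordinal (ltnW j1u)); rewrite /= j1u agree_outside_pred2 ?nth_set_nth2 ?eqxx ?orbT //=.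
by rewrite uj; case/orP: step => /andP[-> ->]; rewrite ?orbT.
Qed.

Lemma adj_letter_cons x u w : adj_letter k u w -> adj_letter k (x :: u) (x :: w).
Proof. by case/adj_letterP => j [y [ju -> step]]; apply/adj_letterP; exists j.+1, y. Qed.

Lemma adj_block_cons x u w : adj_block k u w -> adj_block k (x :: u) (x :: w).
Proof. by case/adj_blockP => j [y [ju uj -> step]]; apply/adj_blockP; exists j.+1, y. Qed.

Lemma pell_cat p s : pell k p -> pell k s -> pell k (p ++ s).
Proof.
move=> pp ps; move: p pp; apply: pell_ind => //= [x p xk _ -> | p _ ->].
  by rewrite (ltn_eqF xk) xk.
by rewrite eqxx.
Qed.

Lemma pell_adj_cat p u w : pell k p -> pell_adj k u w -> pell_adj k (p ++ u) (p ++ w).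
Proof.
move=> pp /and3P[pu pw adj]; rewrite /pell_adj !pell_cat //=.
elim: p {pp} => //= x p.
by case/orP => [/(adj_letter_cons x) | /(adj_block_cons x)] ->; rewrite ?orbT.
Qed.

Lemma pell_deg_le_size n (v : n.-tuple 'I_k.+1) (L : seq (seq nat)) :
  (forall w, pell_adj k (map val v) w -> w \in L) -> pell_deg v <= size L.
Proof.
move=> nbr; rewrite /pell_deg cardE -(size_map (fun w : n.-tuple 'I_k.+1 => map val w)).
apply: uniq_leq_size => [|s /mapP[w]].
  by rewrite map_inj_uniq ?enum_uniq // => w1 w2 /(inj_map val_inj)/val_inj.
by rewrite mem_enum inE => /andP[_ /nbr] + ->.
Qed.

Lemma pell_vertex_of_seq n s : size s = n -> pell k s ->
  exists2 v : n.-tuple 'I_k.+1, pell_vertex v & map val v = s.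
Proof.
move=> sn ps; have sn' : size (map (@inord k) s) == n by rewrite size_map sn.
have Es : map val (Tuple sn') = s.
  rewrite /= -map_comp -[RHS]map_id; apply/eq_in_map => x xs /=.
  by rewrite inordK // ltnS (allP (pell_le ps)).
by exists (Tuple sn'); rewrite /pell_vertex Es.
Qed.

Lemma size_le_pell_deg n (v : n.-tuple 'I_k.+1) (L : seq (seq nat)) : uniq L ->
  (forall w, w \in L -> size w = n /\ pell_adj k (map val v) w) -> size L <= pell_deg v.
Proof.
move=> uL nbr; rewrite /pell_deg cardE -(size_map (fun w : n.-tuple 'I_k.+1 => map val w)).
apply: uniq_leq_size => // w /nbr[wn adj].
have [|w' w'V Ew'] := pell_vertex_of_seq wn; first by case/and3P: adj.
by rewrite -Ew'; apply: map_f; rewrite mem_enum inE w'V Ew'.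
Qed.

Section Bounds.

Hypothesis k_gt1 : 1 < k.

(* Both block moves, (k-1)(k-1) -> kk and kk -> (k-1)(k-1), are indexed by [up = true]. *)
Definition pell_move (u : seq nat) (j : nat) (up : bool) : seq nat :=
  let x := nth 0 u j in
  if ~~ up then set_nth 0 u j x.-1
  else if x <= k - 2 then set_nth 0 u j x.+1
  else set_nth2 u j (if x == k.-1 then k else k.-1).

Definition pell_moves (u : seq nat) : seq (seq nat) :=
  [seq pell_move u j up | j <- iota 0 (size u), up <- [:: true; false]].

Lemma size_pell_moves u : size (pell_moves u) = 2 * size u.
Proof. by rewrite size_allpairs size_iota mulnC. Qed.

Lemma pell_adj_in_moves u w : pell_adj k u w -> w \in pell_moves u.
Proof.
have move_in j up : j < size u -> pell_move u j up \in pell_moves u.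
  by move=> ju; apply: allpairs_f; rewrite ?mem_iota ?ju //; case: up.
case/and3P=> _ _ /orP[/adj_letterP[j [y [ju -> step]]] |
                     /adj_blockP[j [y [j1u _ -> step]]]].
  case/orP: step => /andP[/eqP yE le].
    by rewrite (_ : set_nth _ _ _ _ = pell_move u j true) ?move_in // /pell_move le yE.
  by rewrite (_ : set_nth _ _ _ _ = pell_move u j false) ?move_in // /pell_move yE.
rewrite (_ : set_nth2 _ _ _ = pell_move u j true) ?move_in ?(ltnW j1u) // /pell_move /=.
have [km1_gt km_gt k_neq] :
  [/\ k.-1 <= k - 2 = false, k <= k - 2 = false & k == k.-1 = false] by split; lia.
by case/orP: step => /andP[/eqP-> /eqP->]; rewrite ?km1_gt ?km_gt ?k_neq ?eqxx.
Qed.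

Lemma pell_deg_le_double n (v : n.-tuple 'I_k.+1) : pell_deg v <= 2 * n.
Proof.
have <- : size (pell_moves (map val v)) = 2 * n by rewrite size_pell_moves size_map size_tuple.
exact/pell_deg_le_size/pell_adj_in_moves.
Qed.

Fixpoint letter_nbrs (s : seq nat) : seq (seq nat) :=
  if s is x :: t then
    if x == k then
      if t is _ :: t' then [:: k.-1, k.-1 & t'] :: map (cat [:: k; k]) (letter_nbrs t')
      else [::]
    else ((if x == 0 then 1 else x.-1) :: t) :: map (cons x) (letter_nbrs t)
  else [::].

Lemma size_letter_nbrs s : pell k s -> uphalf (size s) <= size (letter_nbrs s).
Proof.
move: s; apply: pell_ind => // [x s xk _ IH | s _ IH] /=; last by rewrite eqxx /= size_map.
by rewrite (ltn_eqF xk) /= size_map; lia.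
Qed.

Lemma uniq_letter_nbrs s : pell k s -> uniq (letter_nbrs s).
Proof.
move: s; apply: pell_ind => // [x s xk _ IH | s _ IH] /=.
  rewrite (ltn_eqF xk) /= map_inj_uniq ?IH ?andbT; last by move=> ? ? [].
  by apply/mapP => -[w _ [+ _]]; case: ifP; lia.
rewrite eqxx /= map_inj_uniq ?IH ?andbT; last by move=> ? ? [].
by apply/mapP => -[w _ [+ _]]; lia.
Qed.

Lemma letter_nbrs_adj s w : pell k s -> w \in letter_nbrs s ->
  size w = size s /\ pell_adj k s w.
Proof.
move=> ps; move: s ps w; apply: pell_ind => // [x s xk ps IH | s ps IH] w /=.
  rewrite (ltn_eqF xk) inE => /orP[/eqP-> | /mapP[w' /IH[sw' adj] ->]]; last first.
    split; first by rewrite /= sw'.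
    by apply: (pell_adj_cat (p := [:: x])) adj; rewrite /= (ltn_eqF xk) xk.
  set y := if x == 0 then 1 else x.-1.
  have [yk step] : y < k /\ letter_step x y by rewrite /y /letter_step; case: ifP; lia.
  split=> //; rewrite /pell_adj /= (ltn_eqF xk) (ltn_eqF yk) xk yk ps /=.
  by apply/orP; left; apply/adj_letterP; exists 0, y.
rewrite eqxx inE => /orP[/eqP-> | /mapP[w' /IH[sw' adj] ->]]; last first.
  split; first by rewrite /= sw'.
  by apply: (pell_adj_cat (p := [:: k; k])) adj; rewrite /= eqxx.
have [km1_lt km1_neq] : k.-1 < k /\ k.-1 == k = false by split; lia.
split=> //; rewrite /pell_adj /= km1_lt km1_neq !eqxx ps /=.
apply/orP; right; apply/adj_blockP; exists 0, k.-1; split => //.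
by rewrite /block_step !eqxx orbT.
Qed.

Lemma uphalf_le_pell_deg n (v : n.-tuple 'I_k.+1) :
  pell_vertex v -> uphalf n <= pell_deg v.
Proof.
move=> pv; apply: leq_trans (size_le_pell_deg (uniq_letter_nbrs pv) _).
  by rewrite -{1}(size_tuple v) -(size_map val); apply: size_letter_nbrs.
by move=> w /(letter_nbrs_adj pv) [-> adj]; rewrite size_map size_tuple.
Qed.

Definition kk_word n : seq nat := nseq (n./2).*2 k ++ nseq (odd n) 0.

Definition kk_word_nbrs n : seq (seq nat) :=
  [seq set_nth2 (kk_word n) i.*2 k.-1 | i <- iota 0 n./2] ++
  nseq (odd n) (set_nth 0 (kk_word n) (n./2).*2 1).

Lemma size_kk_word n : size (kk_word n) = n.
Proof. by rewrite /kk_word size_cat !size_nseq addnC odd_double_half. Qed.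

Lemma nth_kk_word n i : nth 0 (kk_word n) i = if i < (n./2).*2 then k else 0.
Proof.
by rewrite /kk_word nth_cat size_nseq !nth_nseq; case: (i < _); rewrite ?if_same.
Qed.

Lemma pell_kk_word n : pell k (kk_word n).
Proof.
rewrite pell_cat //; last by rewrite pell_lt // all_nseq (ltnW k_gt1) orbT.
by elim: n./2 => //= m ->; rewrite eqxx.
Qed.

Lemma size_kk_word_nbrs n : size (kk_word_nbrs n) = uphalf n.
Proof. by rewrite size_cat size_map size_iota size_nseq; lia. Qed.

Lemma kk_word_adj_in_nbrs n w : pell_adj k (kk_word n) w -> w \in kk_word_nbrs n.
Proof.
have nth_kk := nth_kk_word n.
rewrite mem_cat; case/and3P=> _ pw.
case/orP=> [/adj_letterP[j [y [+ -> step]]] | /adj_blockP[j [y [+ + wE step]]]].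
  rewrite size_kk_word => jn; move: step; rewrite /letter_step nth_kk.
  case: ifP => jM step; first by lia.
  have [-> odd_n] : j = (n./2).*2 /\ odd n by lia.
  have -> : y = 1 by lia.
  by rewrite odd_n /= inE eqxx orbT.
subst w; rewrite !nth_kk => j1n uj; move: step; rewrite /block_step nth_kk => step.
have [j1M yE] : j.+1 < (n./2).*2 /\ y = k.-1 by move: uj step; case: ifP; case: ifP; lia.
subst y.
have even_j : ~~ odd j.
  (* the k's in front of position j have to pair up into letters kk *)
  apply: (pell_prefix_even pw) => [i ij|]; rewrite nth_set_nth2 nth_kk.
    by rewrite ifF ?ifT //; lia.
  by rewrite eqxx /=; lia.
apply/orP; left; apply/mapP; exists j./2; first by rewrite mem_iota; lia.
by congr set_nth2; lia.
Qed.

Lemma pell_deg_kk_word n (v : n.-tuple 'I_k.+1) :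
  map val v = kk_word n -> pell_deg v = uphalf n.
Proof.
move=> Ev; apply/eqP.
rewrite eqn_leq uphalf_le_pell_deg ?andbT /pell_vertex ?Ev ?pell_kk_word //.
rewrite -size_kk_word_nbrs; apply: pell_deg_le_size => w.
by rewrite Ev; apply: kk_word_adj_in_nbrs.
Qed.

End Bounds.

Definition ones_nbrs n : seq (seq nat) :=
  [seq set_nth 0 (nseq n 1) j c | j <- iota 0 n, c <- [:: 2; 0]].

Lemma uniq_ones_nbrs n : uniq (ones_nbrs n).
Proof.
apply: allpairs_uniq; [exact: iota_uniq | by [] | move=> [j c] [j' c']].
move=> /allpairsP[[a b] [an b20 [-> ->]]] /allpairsP[[a' b'] [_ _ [-> ->]]].
move: an b20; rewrite mem_iota !inE /= => an b20 /(congr1 (nth 0 ^~ a)).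
rewrite !nth_set_nth /= eqxx nth_nseq an.
by case: eqP => [<- <- // | _]; case/orP: b20 => /eqP->.
Qed.

Lemma ones_nbrs_adj n w : 2 < k -> w \in ones_nbrs n ->
  size w = n /\ pell_adj k (nseq n 1) w.
Proof.
move=> k_gt2 /allpairsP[[j c] /= [+ c20 ->]]; rewrite mem_iota /= => jn.
have ones_lt : all (fun x => x < k) (nseq n 1) by rewrite all_nseq (ltnW k_gt2) orbT.
have c_lt : c < k by move: c20; rewrite !inE => /orP[] /eqP->; lia.
split; first by rewrite size_set_nth size_nseq; lia.
rewrite /pell_adj !pell_lt ?all_set_nth ?size_nseq //=.
apply/orP; left; apply/adj_letterP; exists j, c; rewrite size_nseq nth_nseq jn.
by split => //; move: c20; rewrite /letter_step !inE => /orP[] /eqP->; lia.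
Qed.

Lemma pell_deg_ones n (v : n.-tuple 'I_k.+1) :
  2 < k -> map val v = nseq n 1 -> pell_deg v = 2 * n.
Proof.
move=> k_gt2 Ev; apply/eqP; rewrite eqn_leq pell_deg_le_double ?(ltnW k_gt2) //=.
have <- : size (ones_nbrs n) = 2 * n by rewrite size_allpairs size_iota mulnC.
by apply: size_le_pell_deg (uniq_ones_nbrs n) _ => w; rewrite Ev; apply: ones_nbrs_adj.
Qed.

End PellWords.

Theorem corollary5p5 (n k : nat) : 1 <= n -> 3 <= k ->
  ((exists2 v : n.-tuple 'I_k.+1, pell_vertex v & pell_deg v = 2 * n) /\
   (forall v : n.-tuple 'I_k.+1, pell_vertex v -> pell_deg v <= 2 * n)) /\
  ((exists2 v : n.-tuple 'I_k.+1, pell_vertex v & pell_deg v = uphalf n) /\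
   (forall v : n.-tuple 'I_k.+1, pell_vertex v -> uphalf n <= pell_deg v)).
Proof.
move=> _ k_gt2; have k_gt1 : 1 < k by apply: ltnW.
have [vmax vmaxV Emax] : exists2 v : n.-tuple 'I_k.+1, pell_vertex v & map val v = nseq n 1.
  by apply: pell_vertex_of_seq (size_nseq n 1) _; rewrite pell_lt // all_nseq k_gt1 orbT.
have [vmin vminV Emin] := pell_vertex_of_seq (size_kk_word k n) (pell_kk_word k_gt1 n).
split; split.
- by exists vmax; rewrite // pell_deg_ones.
- by move=> v _; apply: pell_deg_le_double.
- by exists vmin; rewrite // (pell_deg_kk_word k_gt1).
- by move=> v; apply: uphalf_le_pell_deg.
Qed.
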